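(* Let $H$ be a graded, connected, free and cofree Hopf algebra over $K$, with $\mathfrak g=\mathrm{Prim}(H)$. Then for all $n\ge1$, $\dim(\mathfrak g_n)=\dim\big(\big(\frac{H^+}{H^{+2}}\big)_n\big)$.
   Context: $K$ is a commutative field of characteristic $\neq2$. A graded connected Hopf algebra is a Hopf algebra $H=\bigoplus_{n\ge0}H_n$ over $K$ with homogeneous structure maps, $H_0=K$ and every $H_n$ finite-dimensional. $H^+=\bigoplus_{n\ge1}H_n$, $H^{+2}$ is the span of products of two elements of $H^+$, $\mathfrak g_n=\mathfrak g\cap H_n$. $H$ is free if there is a graded subspace $V$ with $T(V)\to H$ an algebra isomorphism; cofree if it is isomorphic as a graded coalgebra to $coT(W)$ ($T(W)$ with deconcatenation coproduct) for some graded $W$ with $W_0=0$. *)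

(* Graded connected Hopf algebras over a field K, described
   in coordinates: H_n = K^(d n) with basis indexed by 'I_(d n); the basis of
   H = (+)_n H_n is indexed by  bidx d = {n : nat & 'I_(d n)}  (tag = degree).
   An element of (the completion of) H is a function  bidx d -> K ; H itself is
   the subset of finitely supported such functions.  Tensors H (x) H are
   functions  bidx d -> bidx d -> K, triple tensors take three arguments. *)
From HB Require Import structures.
From mathcomp Require Import all_boot all_order all_algebra.
Set Implicit Arguments. Unset Strict Implicit. Unset Printing Implicit Defensive.
Import Order.TTheory GRing.Theory Num.Theory.
Local Open Scope ring_scope.

Definition bidx (d : nat -> nat) := {n : nat & 'I_(d n)}.
Definition bdeg (d : nat -> nat) (b : bidx d) : nat := tag b.

Definition sumle (K : fieldType) (d : nat -> nat) (n : nat) (F : bidx d -> K) : K :=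
  \sum_(p < n.+1) \sum_(i < d p) F (existT (fun k => 'I_(d k)) (nat_of_ord p) i).

Record hopf_data (K : fieldType) := HopfData {
  hdim : nat -> nat;
  hmul : bidx hdim -> bidx hdim -> bidx hdim -> K;     (* coeff of c in a*b *)
  hunit : bidx hdim -> K;
  hcomul : bidx hdim -> bidx hdim -> bidx hdim -> K;   (* coeff of a(x)b in Delta c *)
  hcounit : bidx hdim -> K
}.
Arguments hdim {K} h _.
Arguments hmul {K} h _ _ _.
Arguments hunit {K} h _.
Arguments hcomul {K} h _ _ _.
Arguments hcounit {K} h _.

Section Ops.
Variables (K : fieldType) (H : hopf_data K).
Local Notation d := (hdim H).
Local Notation B := (bidx d).
Definition elt := B -> K.
Definition tens2 := B -> B -> K.
Definition tens3 := B -> B -> B -> K.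

Definition finsupp (x : elt) : Prop := exists N : nat, forall b : B, (N < bdeg b)%N -> x b = 0.
Definition homog (n : nat) (x : elt) : Prop := forall b : B, bdeg b != n -> x b = 0.

Definition mulH (x y : elt) : elt := fun c =>
  sumle (bdeg c) (fun a => sumle (bdeg c) (fun b => x a * y b * hmul H a b c)).
Definition oneH : elt := hunit H.
Definition comulH (x : elt) : tens2 := fun a b =>
  sumle (bdeg a + bdeg b) (fun c => x c * hcomul H c a b).
Definition counitH (x : elt) : K := sumle 0 (fun u => x u * hcounit H u).
Definition tens (x y : elt) : tens2 := fun a b => x a * y b.
Definition addH (x y : elt) : elt := fun b => x b + y b.

Definition comul_l (T : tens2) : tens3 := fun a b c =>
  sumle (bdeg a + bdeg b) (fun f => T f c * hcomul H f a b).
Definition comul_r (T : tens2) : tens3 := fun a b c =>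
  sumle (bdeg b + bdeg c) (fun f => T a f * hcomul H f b c).
Definition counit_l (T : tens2) : elt := fun b => sumle 0 (fun u => hcounit H u * T u b).
Definition counit_r (T : tens2) : elt := fun a => sumle 0 (fun u => T a u * hcounit H u).
Definition mulT (T U : tens2) : tens2 := fun a b =>
  sumle (bdeg a) (fun a1 => sumle (bdeg a) (fun b1 =>
  sumle (bdeg b) (fun a2 => sumle (bdeg b) (fun b2 =>
    T a1 a2 * U b1 b2 * hmul H a1 b1 a * hmul H a2 b2 b)))).

(* linear endomorphism S of H given by coefficients S a b (coeff of b in S a) *)
Definition applyS (S : B -> B -> K) (x : elt) : elt := fun b =>
  sumle (bdeg b) (fun a => x a * S a b).
Definition conv_Sid (S : B -> B -> K) (x : elt) : elt := fun c =>
  sumle (bdeg c) (fun a => sumle (bdeg c) (fun b =>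
    (sumle (bdeg c) (fun a' => comulH x a' b * S a' a)) * hmul H a b c)).
Definition conv_idS (S : B -> B -> K) (x : elt) : elt := fun c =>
  sumle (bdeg c) (fun a => sumle (bdeg c) (fun b =>
    (sumle (bdeg c) (fun b' => comulH x a b' * S b' b)) * hmul H a b c)).

Definition is_graded_connected_hopf : Prop :=
  (forall a b c : B, hmul H a b c != 0 -> bdeg c = (bdeg a + bdeg b)%N) /\
  (forall a b c : B, hcomul H c a b != 0 -> bdeg c = (bdeg a + bdeg b)%N) /\
  (forall u : B, hunit H u != 0 -> bdeg u = 0%N) /\
  (forall u : B, hcounit H u != 0 -> bdeg u = 0%N) /\
  (d 0 = 1%N) /\
  (forall x y z, finsupp x -> finsupp y -> finsupp z ->
     mulH (mulH x y) z = mulH x (mulH y z)) /\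
  (forall x, finsupp x -> mulH oneH x = x /\ mulH x oneH = x) /\
  (forall x, finsupp x -> comul_l (comulH x) = comul_r (comulH x)) /\
  (forall x, finsupp x -> counit_l (comulH x) = x /\ counit_r (comulH x) = x) /\
  (forall x y, finsupp x -> finsupp y ->
     comulH (mulH x y) = mulT (comulH x) (comulH y)) /\
  (forall x y, finsupp x -> finsupp y ->
     counitH (mulH x y) = counitH x * counitH y) /\
  (comulH oneH = tens oneH oneH) /\ (counitH oneH = 1) /\
  (exists S : B -> B -> K,
    (forall a b : B, S a b != 0 -> bdeg a = bdeg b) /\
    (forall x, finsupp x ->
       conv_Sid S x = (fun c => counitH x * oneH c) /\
       conv_idS S x = (fun c => counitH x * oneH c))).

Definition in_Hplus (x : elt) : Prop := finsupp x /\ forall b : B, bdeg b = 0%N -> x b = 0.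
Definition in_Hplus2 (z : elt) : Prop :=
  exists (k : nat) (x y : 'I_k -> elt),
    (forall i, in_Hplus (x i) /\ in_Hplus (y i)) /\
    z = (fun b => \sum_(i < k) mulH (x i) (y i) b).

Definition primitive (x : elt) : Prop :=
  finsupp x /\ comulH x = (fun a b => x a * oneH b + oneH a * x b).

Definition embed (n : nat) (v : 'rV[K]_(d n)) : elt := fun b =>
  if bdeg b == n then
    match (insub (nat_of_ord (tagged b)) : option 'I_(d n)) with
    | Some j => v ord0 j
    | None => 0
    end
  else 0.

Definition letter (e : nat -> nat) := {n : nat & 'I_(e n)}.
Definition wdeg (e : nat -> nat) (w : seq (letter e)) : nat := sumn [seq tag l | l <- w].

Definition words_basis (e : nat -> nat) (phi : seq (letter e) -> elt) : Prop :=
  (forall (ws : seq (seq (letter e))) (c : seq (letter e) -> K), uniq ws ->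
     (fun b => \sum_(w <- ws) c w * phi w b) = (fun _ => 0) ->
     forall w, w \in ws -> c w = 0) /\
  (forall x, finsupp x -> exists (ws : seq (seq (letter e))) (c : seq (letter e) -> K),
     x = (fun b => \sum_(w <- ws) c w * phi w b)).

(* free: H = T(V) for a graded subspace V (V_0 = 0 necessarily) with homogeneous
   basis gen; the algebra map T(V) -> H sends the word basis of T(V) to monomials *)
Definition monomial (e : nat -> nat) (gen : letter e -> elt) (w : seq (letter e)) : elt :=
  foldr (fun l acc => mulH (gen l) acc) oneH w.
Definition is_free : Prop :=
  exists (e : nat -> nat) (gen : letter e -> elt),
    e 0 = 0%N /\ (forall l, homog (tag l) (gen l)) /\ words_basis (monomial gen).

(* cofree: graded coalgebra isomorphism coT(W) -> H, W graded with W_0 = 0 and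
   homogeneous basis the letters; coT(W) has basis the words, with
   deconcatenation coproduct and counit eps(w) = [w == nil] *)
Definition is_cofree : Prop :=
  exists (e : nat -> nat) (phi : seq (letter e) -> elt),
    [/\ e 0 = 0%N,
        (forall w, homog (wdeg w) (phi w)),
        words_basis phi,
        (forall w, comulH (phi w) =
           (fun a b => \sum_(j < (size w).+1) phi (take j w) a * phi (drop j w) b)) &
        (forall w, counitH (phi w) = (w == [::])%:R)].

End Ops.

(* If H = T(V) is free on homogeneous generators, then in positive degree H^{+2} is spanned
   by the monomials of length at least 2, so (H^+/H^{+2})_n has dimension the number of
   generators of degree n.  If H = coT(W) is cofree, a primitive element has no component on
   words of length at least 2, since the deconcatenation coproduct isolates the coefficient of
   such a word w = l w' on the tensor l (x) w'; so dim g_n is the number of letters of W of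
   degree n.  In both cases dim H_n counts the words of degree n, and
   #words(n) = sum_k #letters(k) #words(n - k) determines the number of letters of each degree
   recursively; hence dim V_n = dim W_n. *)

From HB Require Import structures.
From mathcomp Require Import all_boot all_order all_algebra.
From mathcomp Require Import zify ring.
From Stdlib Require Import FunctionalExtensionality.
Set Implicit Arguments. Unset Strict Implicit. Unset Printing Implicit Defensive.
Import GRing.Theory.
Local Open Scope ring_scope.

Lemma big_pred1_seq (R : Type) (idx : R) (op : Monoid.law idx) (T : eqType)
    (s : seq T) (x : T) (F : T -> R) :
  uniq s -> x \in s -> \big[op/idx]_(y <- s | y == x) F y = F x.
Proof. by move=> s_uniq s_x; rewrite -big_filter (filter_pred1_uniq s_uniq s_x) big_seq1. Qed.

Lemma eq_take_drop (T : Type) (s t : seq T) i j : (i <= size s)%N -> (j <= size t)%N ->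
  take i s = take j t -> drop i s = drop j t -> i = j /\ s = t.
Proof.
move=> i_le j_le eq_take eq_drop; split.
  by rewrite -(size_takel i_le) -(size_takel j_le) eq_take.
by rewrite -(cat_take_drop i s) -(cat_take_drop j t) eq_take eq_drop.
Qed.

Section Words.
Variable e : nat -> nat.

Definition letters_upto (n : nat) : seq (letter e) :=
  [seq (existT (fun k => 'I_(e k)) k i : letter e) | k <- iota 1 n, i <- enum 'I_(e k)].

(* Words of degree [n] in letters of positive degree; the fuel [f >= n] bounds their length. *)
Fixpoint words_fuel (f n : nat) : seq (seq (letter e)) :=
  if n is 0 then [:: [::]] else
  if f is f'.+1 then [seq l :: w | l <- letters_upto n, w <- words_fuel f' (n - tag l)]
  else [::].

Definition words n := words_fuel n n.

Definition positive_word (w : seq (letter e)) := all (fun l : letter e => 0 < tag l)%N w.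

Definition length1 (w : seq (letter e)) := size w == 1%N.

Lemma mem_letters_upto n l : (l \in letters_upto n) = (0 < tag l <= n)%N.
Proof.
apply/allpairsPdep/idP.
  by move=> [k [i [+ _ ->]]]; rewrite mem_iota /= add1n ltnS.
case: l => k i /= Hk; exists k, i; split => //.
  by rewrite mem_iota add1n ltnS.
by rewrite mem_enum.
Qed.

Lemma uniq_letters_upto n : uniq (letters_upto n).
Proof.
apply: allpairs_uniq_dep; first exact: iota_uniq.
  by move=> k _; exact: enum_uniq.
by move=> [k i] [k' i'] _ _.
Qed.

Lemma mem_words_fuel f n w : (n <= f)%N ->
  (w \in words_fuel f n) = (wdeg w == n) && positive_word w.
Proof.
elim: f n w => [|f IH] [|n] w //=;
  try by move=> _; rewrite inE; case: w => //= -[[|k] i] w; rewrite /wdeg /= ?andbF.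
move=> le_nf; apply/allpairsPdep/idP.
  move=> [[k i] [w' [+ + ->]]]; rewrite mem_letters_upto /= => /andP [k_gt0 k_le].
  rewrite IH; last by lia.
  move=> /andP [/eqP w'_deg w'_pos]; rewrite /= k_gt0 w'_pos /wdeg /= -/(wdeg w') w'_deg.
  by rewrite subnKC ?eqxx.
case: w => [|[k i] w]; first by rewrite /wdeg.
rewrite /wdeg /= -/(wdeg w) => /andP [/eqP w_deg /andP [k_gt0 w_pos]].
exists (existT _ k i), w; split => //.
  by rewrite mem_letters_upto k_gt0 -w_deg leq_addr.
rewrite IH -w_deg ?addKn ?eqxx //=; lia.
Qed.

Lemma uniq_words_fuel f n : uniq (words_fuel f n).
Proof.
elim: f n => [|f IH] [|n] //=.
apply: allpairs_uniq_dep; first exact: uniq_letters_upto.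
  by move=> l _; exact: IH.
by move=> [l w] [l' w'] _ _ /= [-> ->].
Qed.

Lemma mem_words n w : (w \in words n) = (wdeg w == n) && positive_word w.
Proof. exact: mem_words_fuel. Qed.

Lemma uniq_words n : uniq (words n).
Proof. exact: uniq_words_fuel. Qed.

Lemma nil_notin_words n : (0 < n)%N -> [::] \notin words n.
Proof. by rewrite mem_words /wdeg /= andbT eq_sym -lt0n. Qed.

Lemma size_words_fuel f n : (n <= f)%N -> size (words_fuel f n) = size (words n).
Proof.
move=> le_nf; apply/perm_size/uniq_perm; rewrite ?uniq_words_fuel // => w.
by rewrite mem_words mem_words_fuel.
Qed.

Lemma size_words_rec n : (0 < n)%N ->
  size (words n) = (\sum_(k <- iota 1 n) e k * size (words (n - k)))%N.
Proof.
case: n => // n _; rewrite {1}/words /= size_allpairs_dep sumnE big_map.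
rewrite /letters_upto big_allpairs_dep; apply: eq_big_seq => k.
rewrite mem_iota add1n ltnS => /andP [k_gt0 k_le] /=.
rewrite size_words_fuel; last by lia.
by rewrite big_const_seq /= count_predT size_enum_ord iter_addn_0 mulnC.
Qed.

Section NoDegreeZeroLetters.
Hypothesis e0 : e 0 = 0%N.

Lemma positive_wordT w : positive_word w.
Proof.
elim: w => //= -[[|k] i] w -> //=.
by have := ltn_ord i; move: (nat_of_ord i); rewrite e0.
Qed.

Lemma tag_letter_gt0 (l : letter e) : (0 < tag l)%N.
Proof. by have := positive_wordT [:: l]; rewrite /positive_word /= andbT. Qed.

Lemma wdeg_gt0 (w : seq (letter e)) : w != [::] -> (0 < wdeg w)%N.
Proof.
by case: w (positive_wordT w) => // -[k i] w /andP [k_gt0 _] _; rewrite /wdeg /= addn_gt0 k_gt0.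
Qed.

Lemma mem_wordsE n w : (w \in words n) = (wdeg w == n).
Proof. by rewrite mem_words positive_wordT andbT. Qed.

Lemma count_length1_words n : (0 < n)%N ->
  count length1 (words n) = e n.
Proof.
move=> n_gt0; rewrite -size_filter -[e n]size_enum_ord.
rewrite -(size_map (fun i => [:: existT (fun k => 'I_(e k)) n i])).
apply/perm_size/uniq_perm.
- exact/filter_uniq/uniq_words.
- rewrite map_inj_uniq ?enum_uniq // => i j [] /(congr1 (tagged_as (existT _ n i))).
  by rewrite !tagged_asE.
move=> w; rewrite mem_filter mem_wordsE /length1; apply/andP/mapP.
  case: w => [|[k i] [|l w]] [] //= _; rewrite /wdeg /= addn0 => /eqP Ek; subst k.
  by exists i; rewrite ?mem_enum.
by move=> [i _ ->]; rewrite /wdeg /= addn0.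
Qed.

End NoDegreeZeroLetters.

End Words.

Lemma eq_alphabet_of_size_words (e e' : nat -> nat) :
  (forall m, size (words e m) = size (words e' m)) -> forall k, (0 < k)%N -> e k = e' k.
Proof.
move=> eq_size k; elim/ltn_ind: k => -[//|k] IH _.
have := eq_size k.+1; rewrite !size_words_rec //.
rewrite (_ : iota 1 k.+1 = index_iota 1 k.+2); last by rewrite /index_iota subSS subn0.
rewrite !(big_nat_recr k.+1) //= subnn !muln1.
rewrite (@eq_big_nat _ _ _ 1 k.+1 _ (fun j => e' j * size (words e' (k.+1 - j)))%N).
  by move/eqP; rewrite eqn_add2l => /eqP.
by move=> j /andP [j_gt0 j_lt]; rewrite eq_size IH.
Qed.

Section Coordinates.
Variables (K : fieldType) (H : hopf_data K).
Local Notation d := (hdim H).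
Local Notation B := (bidx d).

Definition proj (n : nat) (x : elt H) : 'rV[K]_(d n) := \row_j x (existT _ n j).

Lemma embed_proj n x : homog n x -> embed (proj n x) = x.
Proof.
move=> x_homog; apply: functional_extensionality => -[m i]; rewrite /embed /bdeg /=.
case: eqP => [<-|/eqP m_neq]; last by rewrite x_homog.
by rewrite valK mxE.
Qed.

Lemma proj_embed n : cancel (@embed K H n) (proj n).
Proof. by move=> v; apply/rowP => j; rewrite mxE /embed /bdeg /= eqxx valK. Qed.

Lemma homog_embed n (v : 'rV[K]_(d n)) : homog n (embed v).
Proof. by move=> b b_deg; rewrite /embed (negbTE b_deg). Qed.

Lemma homog_finsupp n (x : elt H) : homog n x -> finsupp x.
Proof. by move=> x_homog; exists n => b b_deg; apply: x_homog; rewrite neq_ltn b_deg orbT. Qed.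

Lemma embed0 n b : embed (0 : 'rV[K]_(d n)) b = 0.
Proof. by rewrite /embed; case: eqP => // _; case: insub => // j; rewrite mxE. Qed.

Lemma embedZ n a (v : 'rV[K]_(d n)) b : embed (a *: v) b = a * embed v b.
Proof.
rewrite /embed; case: eqP => _; last by rewrite mulr0.
by case: insub => [j|]; rewrite ?mxE ?mulr0.
Qed.

Lemma embed_sum n (I : Type) (r : seq I) (F : I -> 'rV[K]_(d n)) b :
  embed (\sum_(i <- r) F i) b = \sum_(i <- r) embed (F i) b.
Proof.
elim: r => [|i r IH]; first by rewrite !big_nil embed0.
rewrite !big_cons -IH /embed; case: eqP => _; last by rewrite addr0.
by case: insub => [j|]; rewrite ?mxE ?addr0.
Qed.

Lemma proj_sum n (I : Type) (r : seq I) (a : I -> K) (x : I -> elt H) :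
  proj n (fun b => \sum_(i <- r) a i * x i b) = \sum_(i <- r) a i *: proj n (x i).
Proof. by apply/rowP => j; rewrite mxE summxE; apply: eq_bigr => i _; rewrite !mxE. Qed.

Lemma in_Hplus_homog p (x : elt H) : (0 < p)%N -> homog p x -> in_Hplus x.
Proof.
move=> p_gt0 x_homog; split=> [|b b_deg]; first exact: homog_finsupp x_homog.
by apply: x_homog; rewrite b_deg eq_sym -lt0n.
Qed.

Lemma in_HplusZ a (x : elt H) : in_Hplus x -> in_Hplus (fun b => a * x b).
Proof.
case=> -[N x_supp] x0; split=> [|b /x0 ->]; last exact: mulr0.
by exists N => b /x_supp ->; rewrite mulr0.
Qed.

End Coordinates.

Section Bilinearity.
Variables (K : fieldType) (H : hopf_data K).
Local Notation B := (bidx (hdim H)).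

Lemma eq_sumle m (F G : B -> K) : F =1 G -> sumle m F = sumle m G.
Proof. by move=> /functional_extensionality ->. Qed.

Lemma sumle_sum m (I : Type) (r : seq I) (F : I -> B -> K) :
  sumle m (fun b => \sum_(i <- r) F i b) = \sum_(i <- r) sumle m (F i).
Proof. by rewrite /sumle; under eq_bigr do rewrite exchange_big; rewrite exchange_big. Qed.

Lemma sumleZ m a (F : B -> K) : sumle m (fun b => a * F b) = a * sumle m F.
Proof. by rewrite /sumle mulr_sumr; apply: eq_bigr => p _; rewrite mulr_sumr. Qed.

Lemma sumle_eq0 m (F : B -> K) : F =1 (fun=> 0) -> sumle m F = 0.
Proof. by move=> F0; rewrite /sumle big1 // => p _; rewrite big1. Qed.

Lemma mulH_suml_sumr (I J : Type) (r : seq I) (s : seq J) (a : I -> K) (a' : J -> K)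
    (x : I -> elt H) (y : J -> elt H) c :
  mulH (fun b => \sum_(i <- r) a i * x i b) (fun b => \sum_(j <- s) a' j * y j b) c =
  \sum_(i <- r) \sum_(j <- s) a i * a' j * mulH (x i) (y j) c.
Proof.
rewrite /mulH (eq_sumle _ (G := fun a0 => \sum_(i <- r) \sum_(j <- s) a i * a' j *
    sumle (bdeg c) (fun b0 => x i a0 * y j b0 * hmul H a0 b0 c))); last first.
  move=> a0; rewrite (eq_sumle _ (G := fun b0 => \sum_(i <- r) \sum_(j <- s)
      a i * a' j * (x i a0 * y j b0 * hmul H a0 b0 c))); last first.
    move=> b0; rewrite !big_distrl; apply: eq_bigr => i _.
    by rewrite !big_distrr big_distrl; apply: eq_bigr => j _ /=; ring.
  by rewrite sumle_sum; apply: eq_bigr => i _; rewrite sumle_sum; under eq_bigr do rewrite sumleZ.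
by rewrite sumle_sum; apply: eq_bigr => i _; rewrite sumle_sum; under eq_bigr do rewrite sumleZ.
Qed.

Lemma mulHZl a (x y : elt H) c : mulH (fun b => a * x b) y c = a * mulH x y c.
Proof.
have := mulH_suml_sumr [:: tt] [:: tt] (fun=> a) (fun=> 1) (fun=> x) (fun=> y) c.
rewrite !big_seq1 mulr1 => <-; congr mulH; apply: functional_extensionality => b.
  by rewrite big_seq1.
by rewrite big_seq1 mul1r.
Qed.

Lemma comulH_sum (I : Type) (r : seq I) (a : I -> K) (x : I -> elt H) a0 b0 :
  comulH (fun b => \sum_(i <- r) a i * x i b) a0 b0 = \sum_(i <- r) a i * comulH (x i) a0 b0.
Proof.
rewrite /comulH (eq_sumle _ (G := fun c => \sum_(i <- r) a i * (x i c * hcomul H c a0 b0))).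
  by rewrite sumle_sum; apply: eq_bigr => i _; rewrite sumleZ.
by move=> c; rewrite big_distrl; apply: eq_bigr => i _; rewrite mulrA.
Qed.

End Bilinearity.

Section WordBasis.
Variables (K : fieldType) (H : hopf_data K) (e : nat -> nat) (phi : seq (letter e) -> elt H).
Hypothesis e0 : e 0 = 0%N.
Hypothesis phi_homog : forall w, homog (wdeg w) (phi w).
Hypothesis phi_basis : words_basis phi.

Lemma sum_fiber_eq0 (I : eqType) (s : seq I) (f : I -> seq (letter e)) (a : I -> K) :
  (forall b, \sum_(i <- s) a i * phi (f i) b = 0) ->
  forall u, \sum_(i <- s | f i == u) a i = 0.
Proof.
move=> sum0 u; set U := undup (map f s).
have [u_U|u_notU] := boolP (u \in U); last first.
  rewrite big_seq_cond big1 // => i /andP [i_s /eqP fi_u].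
  by move: u_notU; rewrite mem_undup -fi_u map_f.
have collected b : \sum_(u' <- U) (\sum_(i <- s | f i == u') a i) * phi u' b = 0.
  rewrite -[RHS](sum0 b) (eq_bigr (fun u' => \sum_(i <- s | f i == u') a i * phi (f i) b)).
    rewrite (exchange_big_dep xpredT) //=; apply: eq_big_seq => i i_s.
    rewrite (eq_bigl (fun u' => u' == f i)) => [|u']; last exact: eq_sym.
    by rewrite big_pred1_seq ?undup_uniq // mem_undup map_f.
  by move=> u' _; rewrite big_distrl; apply: eq_bigr => i /eqP ->.
exact: phi_basis.1 U _ (undup_uniq _) (functional_extensionality _ _ collected) u u_U.
Qed.

Lemma sum_fiber2_eq0 (I : eqType) (s : seq I) (f g : I -> seq (letter e)) (a : I -> K) :
  (forall b b', \sum_(i <- s) a i * (phi (f i) b * phi (g i) b') = 0) ->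
  forall u v, \sum_(i <- s | (f i == u) && (g i == v)) a i = 0.
Proof.
move=> sum0 u v; rewrite -big_filter_cond.
apply: sum_fiber_eq0 => b'; rewrite big_filter.
apply: (sum_fiber_eq0 (a := fun i => a i * phi (g i) b')) => b.
by rewrite -[RHS](sum0 b b'); apply: eq_bigr => i _; ring.
Qed.

Lemma homog_words_decomposition n x : homog n x ->
  exists c : seq (letter e) -> K, x = (fun b => \sum_(w <- words e n) c w * phi w b).
Proof.
move=> x_homog; have [ws [c x_ws]] := phi_basis.2 x (homog_finsupp x_homog).
exists (fun u => \sum_(w <- ws | w == u) c w).
apply: functional_extensionality => b.
have [b_deg|b_deg] := eqVneq (bdeg b) n; last first.
  rewrite x_homog // big_seq big1 // => u.
  by rewrite mem_wordsE // => /eqP u_deg; rewrite phi_homog ?mulr0 // u_deg.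
rewrite x_ws; symmetry.
rewrite (eq_bigr (fun u => \sum_(w <- ws | w == u) c w * phi w b)); last first.
  by move=> u _; rewrite big_distrl; apply: eq_bigr => w /eqP ->.
rewrite (exchange_big_dep xpredT) //=; apply: eq_bigr => w _.
have [w_n|w_notn] := boolP (w \in words e n).
  by rewrite (eq_bigl (fun u => u == w)) ?big_pred1_seq ?uniq_words // => u; exact: eq_sym.
rewrite big_seq_cond big1; last by move=> u /andP [u_n /eqP w_u]; move: w_notn; rewrite w_u u_n.
rewrite phi_homog ?mulr0 // b_deg eq_sym; by rewrite mem_wordsE in w_notn.
Qed.

Section SelectedWords.
Variables (n : nat) (P : pred (seq (letter e))).

Definition selected_words := [seq w <- words e n | P w].
Definition selected_rows := [seq proj n (phi w) | w <- selected_words].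

Lemma size_selected_rows : size selected_rows = size selected_words.
Proof. exact: size_map. Qed.

Lemma nth_selected_words (i : 'I_(size selected_rows)) :
  P (nth [::] selected_words i) && (nth [::] selected_words i \in words e n).
Proof. by rewrite -mem_filter mem_nth // -size_selected_rows. Qed.

Lemma embed_nth_selected_rows (i : 'I_(size selected_rows)) :
  embed selected_rows`_i = phi (nth [::] selected_words i).
Proof.
have /andP [_] := nth_selected_words i; rewrite mem_wordsE // => /eqP w_deg.
rewrite (nth_map [::]) -?size_selected_rows // embed_proj //.
by move: (@phi_homog (nth [::] selected_words i)); rewrite w_deg.
Qed.

Lemma free_selected_rows : free selected_rows.
Proof.
apply/(@freeP _ _ _ (in_tuple selected_rows)) => k sum0 i.
have phi_sum0 b :
    \sum_(j <- index_enum 'I_(size selected_rows)) k j * phi (nth [::] selected_words j) b = 0.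
  rewrite -[RHS](embed0 n b) -sum0 embed_sum; apply: eq_bigr => j _.
  by rewrite embedZ embed_nth_selected_rows.
have := sum_fiber_eq0 phi_sum0 (nth [::] selected_words i).
rewrite (eq_bigl (fun j => j == i)) ?big_pred1_eq // => j.
by rewrite nth_uniq -?size_selected_rows ?filter_uniq ?uniq_words.
Qed.

Lemma proj_sum_mem_selected (I : eqType) (s : seq I) (a : I -> K) (f : I -> seq (letter e)) :
  (forall i, i \in s -> wdeg (f i) = n -> a i != 0 -> P (f i)) ->
  proj n (fun b => \sum_(i <- s) a i * phi (f i) b) \in <<selected_rows>>%VS.
Proof.
move=> fP; rewrite proj_sum big_seq; apply: memv_suml => i i_s.
have [->|a_neq0] := eqVneq (a i) 0; first by rewrite scale0r mem0v.
apply: memvZ; have [fi_deg|fi_deg] := eqVneq (wdeg (f i)) n.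
  by apply/memv_span/map_f; rewrite mem_filter mem_wordsE // fi_deg eqxx andbT fP.
rewrite (_ : proj n _ = 0) ?mem0v //; apply/rowP => j; rewrite !mxE phi_homog //.
by rewrite /bdeg /= eq_sym.
Qed.

Lemma embed_selected_span (v : 'rV[K]_(hdim H n)) : v \in <<selected_rows>>%VS ->
  embed v = (fun b => \sum_(i < size selected_rows)
    coord (in_tuple selected_rows) i v * phi (nth [::] selected_words i) b).
Proof.
move=> v_span; apply: functional_extensionality => b.
rewrite {1}(@coord_span _ _ _ (in_tuple selected_rows) v v_span) embed_sum.
by apply: eq_bigr => i _; rewrite embedZ embed_nth_selected_rows.
Qed.

Lemma dim_selected_span : \dim <<selected_rows>> = count P (words e n).
Proof. by rewrite (eqP free_selected_rows) size_selected_rows size_filter. Qed.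

End SelectedWords.

Lemma hdim_eq_size_words n : hdim H n = size (words e n).
Proof.
have fullv_span : (fullv <= <<selected_rows n predT>>)%VS.
  apply/subvP => v _; rewrite -(proj_embed v).
  have [c ->] := homog_words_decomposition (homog_embed v).
  exact: (proj_sum_mem_selected (f := id)).
have := dim_selected_span n predT; rewrite count_predT => <-.
suff <- : \dim (fullv : {vspace 'rV[K]_(hdim H n)}) = \dim <<selected_rows n predT>>.
  by rewrite dimvf /dim /= mul1n.
by apply/eqP; rewrite eqn_leq dimvS // dimvS ?subvf.
Qed.

End WordBasis.

Section GradedConnected.
Variables (K : fieldType) (H : hopf_data K).
Local Notation d := (hdim H).
Local Notation B := (bidx d).
Local Notation one := (@oneH K H).
Hypothesis mul_graded : forall a b c : B, hmul H a b c != 0 -> bdeg c = (bdeg a + bdeg b)%N.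
Hypothesis unit_graded : forall u : B, hunit H u != 0 -> bdeg u = 0%N.
Hypothesis hdim0 : d 0 = 1%N.
Hypothesis counit_one : counitH one = 1.

Lemma ord_hdim0 (i : 'I_(d 0)) : i = cast_ord (esym hdim0) ord0.
Proof. by apply: ord_inj => /=; move: (ltn_ord i); move: (nat_of_ord i); rewrite hdim0; case. Qed.

Definition bidx0 : B := existT _ 0%N (cast_ord (esym hdim0) ord0).

Lemma bdeg_eq0 (b : B) : bdeg b = 0%N -> b = bidx0.
Proof. by case: b => m i /= m0; subst m; rewrite (ord_hdim0 i). Qed.

Lemma sumle0E (F : B -> K) : sumle 0 F = F bidx0.
Proof.
rewrite /sumle big_ord1 /= (bigD1 (cast_ord (esym hdim0) ord0)) //= big1 ?addr0 // => j.
by rewrite (ord_hdim0 j) eqxx.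
Qed.

Lemma mulH_homog p q (x y : elt H) : homog p x -> homog q y -> homog (p + q) (mulH x y).
Proof.
move=> x_homog y_homog c c_deg; rewrite /mulH sumle_eq0 // => a; rewrite sumle_eq0 // => b.
have [a_deg|a_deg] := eqVneq (bdeg a) p; last by rewrite x_homog ?mul0r.
have [b_deg|b_deg] := eqVneq (bdeg b) q; last by rewrite (y_homog b) ?mulr0 ?mul0r.
have [->|/mul_graded c_eq] := eqVneq (hmul H a b c) 0; first by rewrite mulr0.
by move: c_deg; rewrite c_eq a_deg b_deg eqxx.
Qed.

Lemma homog_oneH : homog 0 one.
Proof. by move=> b; apply: contraNeq => /unit_graded ->. Qed.

Lemma hcounit_bidx0 : hcounit H bidx0 != 0.
Proof.
by apply: contra_eq_neq counit_one; rewrite /counitH sumle0E => ->; rewrite mulr0 eq_sym oner_eq0.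
Qed.

Lemma oneH_bidx0 : one bidx0 != 0.
Proof.
by apply: contra_eq_neq counit_one; rewrite /counitH sumle0E => ->; rewrite mul0r eq_sym oner_eq0.
Qed.

Lemma homog0_counitH_inj (x y : elt H) :
  homog 0 x -> homog 0 y -> counitH x = counitH y -> x = y.
Proof.
move=> x_homog y_homog; rewrite /counitH !sumle0E => /mulIf eq_xy.
apply: functional_extensionality => b; have [/bdeg_eq0 ->|b_deg] := eqVneq (bdeg b) 0%N.
  exact/eq_xy/hcounit_bidx0.
by rewrite x_homog ?y_homog.
Qed.

Section Free.
Variables (e : nat -> nat) (gen : letter e -> elt H).
Hypothesis e0 : e 0 = 0%N.
Hypothesis gen_homog : forall l, homog (tag l) (gen l).
Hypothesis mul_assoc : forall x y z : elt H, finsupp x -> finsupp y -> finsupp z ->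
  mulH (mulH x y) z = mulH x (mulH y z).
Hypothesis mul1H : forall x : elt H, finsupp x -> mulH one x = x.
Hypothesis gen_basis : words_basis (monomial gen).
Local Notation mono := (monomial gen).

Lemma homog_monomial w : homog (wdeg w) (mono w).
Proof. by elim: w => [|l w IH] /=; [exact: homog_oneH | exact: mulH_homog]. Qed.

Lemma monomial_cat w w' : mono (w ++ w') = mulH (mono w) (mono w').
Proof.
elim: w => [|l w IH] /=; first by rewrite mul1H //; exact: homog_finsupp (homog_monomial (w := w')).
by rewrite IH mul_assoc //; apply: homog_finsupp;
  [exact: gen_homog | exact: homog_monomial | exact: homog_monomial].
Qed.

Lemma in_Hplus_monomial w : w != [::] -> in_Hplus (mono w).
Proof. by move=> /(wdeg_gt0 e0) w_pos; exact: in_Hplus_homog w_pos (homog_monomial (w := w)). Qed.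

Lemma in_Hplus_decomposition x : in_Hplus x ->
  exists (ws : seq (seq (letter e))) (c : seq (letter e) -> K),
    (forall w, c w != 0 -> w != [::]) /\ x = (fun b => \sum_(w <- ws) c w * mono w b).
Proof.
case=> x_supp x0; have [ws [c x_eq]] := gen_basis.2 x x_supp.
exists ws, (fun w => if w == [::] then 0 else c w); split.
  by move=> w; apply: contraNneq => ->; rewrite eqxx.
set z := \sum_(w <- ws) (if w == [::] then c w else 0).
have x_split b : x b = \sum_(w <- ws) (if w == [::] then 0 else c w) * mono w b + z * one b.
  rewrite x_eq big_distrl -big_split /=; apply: eq_bigr => w _.
  by case: eqP => [->|_]; rewrite ?mul0r ?add0r ?addr0.
have z0 : z = 0.
  have := x_split bidx0; rewrite x0 // big1 ?add0r => [/esym/eqP|w _].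
    by rewrite mulf_eq0 (negbTE oneH_bidx0) orbF => /eqP.
  case: eqP => [_|/eqP w_neq0]; first by rewrite mul0r.
  by rewrite (in_Hplus_monomial w_neq0).2 ?mulr0.
by apply: functional_extensionality => b; rewrite x_split z0 mul0r addr0.
Qed.

Lemma proj_mulH_mem n x y : in_Hplus x -> in_Hplus y ->
  proj n (mulH x y) \in <<selected_rows mono n (predC (@length1 e))>>%VS.
Proof.
move=> /in_Hplus_decomposition [ws [c [c_nil ->]]] /in_Hplus_decomposition [ws' [c' [c'_nil ->]]].
rewrite (_ : mulH _ _ = fun b => \sum_(p <- [seq (w, w') | w <- ws, w' <- ws'])
    (c p.1 * c' p.2) * mono (p.1 ++ p.2) b); last first.
  apply: functional_extensionality => b; rewrite mulH_suml_sumr big_allpairs_dep.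
  by apply: eq_bigr => w _; apply: eq_bigr => w' _; rewrite monomial_cat.
apply: (proj_sum_mem_selected e0 homog_monomial (f := fun p => p.1 ++ p.2)) => -[w w'] _ _ /=.
rewrite mulf_eq0 negb_or => /andP [/c_nil w_neq0 /c'_nil w'_neq0].
by rewrite /length1 size_cat; case: w w' w_neq0 w'_neq0 => [|? ?] [|? ?] //=; rewrite addnS.
Qed.

Lemma in_Hplus2_embed_span n (v : 'rV[K]_(hdim H n)) : (0 < n)%N ->
  v \in <<selected_rows mono n (predC (@length1 e))>>%VS -> in_Hplus2 (embed v).
Proof.
move=> n_gt0 v_span; rewrite (embed_selected_span e0 homog_monomial v_span).
set X := selected_rows mono n (predC (@length1 e)).
set u := fun i : 'I_(size X) => nth [::] (selected_words n (predC (@length1 e))) i.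
set co := fun i : 'I_(size X) => coord (in_tuple X) i v.
have u_long i : exists l w', u i = l :: w' /\ w' != [::].
  have /andP [] := nth_selected_words i; rewrite -/(u i) /= /length1.
  case: (u i) => [|l [|l' w']] //; first by rewrite (negbTE (nil_notin_words _ n_gt0)).
  by exists l, (l' :: w').
exists _, (fun i b => co i * (if u i is l :: _ then gen l b else 0)).
exists (fun i => mono (behead (u i))); split=> [i|].
  have [l [w' [-> w'_neq0]]] := u_long i; split; last exact: in_Hplus_monomial.
  exact/in_HplusZ/(in_Hplus_homog (tag_letter_gt0 e0 l) (gen_homog (l := l))).
apply: functional_extensionality => b; apply: eq_bigr => i _.
by rewrite -/(u i); have [l [w' [-> _]]] := u_long i; rewrite /= mulHZl.
Qed.

Lemma mem_Hplus2_span n (v : 'rV[K]_(hdim H n)) : (0 < n)%N ->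
  v \in <<selected_rows mono n (predC (@length1 e))>>%VS <-> in_Hplus2 (embed v).
Proof.
move=> n_gt0; split=> [|[k [x [y [xy_plus v_eq]]]]]; first exact: in_Hplus2_embed_span.
rewrite -(proj_embed v) v_eq (_ : proj n _ = \sum_(i < k) proj n (mulH (x i) (y i))).
  by apply: memv_suml => i _; have [] := xy_plus i; exact: proj_mulH_mem.
by apply/rowP => j; rewrite mxE summxE; apply: eq_bigr => i _; rewrite mxE.
Qed.

End Free.

Section Cofree.
Variables (e : nat -> nat) (phi : seq (letter e) -> elt H).
Hypothesis e0 : e 0 = 0%N.
Hypothesis phi_homog : forall w, homog (wdeg w) (phi w).
Hypothesis phi_basis : words_basis phi.
Hypothesis phi_comul : forall w, comulH (phi w) =
  (fun a b => \sum_(j < (size w).+1) phi (take j w) a * phi (drop j w) b).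
Hypothesis phi_counit : forall w, counitH (phi w) = (w == [::])%:R.

Definition comul_primitive (x : elt H) : Prop :=
  comulH x = (fun a b => x a * one b + one a * x b).

Lemma phi_nil : phi [::] = one.
Proof.
apply: homog0_counitH_inj; first exact: (phi_homog (w := [::])).
  exact: homog_oneH.
by rewrite phi_counit counit_one.
Qed.

Lemma comul_primitive_phi1 w : size w = 1%N -> comul_primitive (phi w).
Proof.
case: w => [|l [|]] //= _; rewrite /comul_primitive phi_comul.
apply: functional_extensionality => a; apply: functional_extensionality => b.
by rewrite !big_ord_recr big_ord0 /= add0r phi_nil addrC.
Qed.

Lemma comul_primitive_sum (I : Type) (r : seq I) (a : I -> K) (y : I -> elt H) :
  (forall i, comul_primitive (y i)) -> comul_primitive (fun b => \sum_(i <- r) a i * y i b).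
Proof.
move=> y_prim; apply: functional_extensionality => a0; apply: functional_extensionality => b0.
rewrite comulH_sum big_distrl big_distrr -big_split /=; apply: eq_bigr => i _.
by rewrite y_prim; ring.
Qed.

Lemma comulH_phiE w a b : w != [::] ->
  comulH (phi w) a b = phi w a * one b + one a * phi w b +
    \sum_(1 <= j < size w) phi (take j w) a * phi (drop j w) b.
Proof.
rewrite -size_eq0 -lt0n => w_pos; rewrite phi_comul.
rewrite -(big_mkord xpredT (fun j => phi (take j w) a * phi (drop j w) b)).
rewrite big_ltn // big_nat_recr //= take0 drop0 take_size drop_size phi_nil; ring.
Qed.

Lemma comul_primitive_reduced n (c : seq (letter e) -> K) : (0 < n)%N ->
  comul_primitive (fun b => \sum_(w <- words e n) c w * phi w b) -> forall a b,
  \sum_(p <- [seq (u, j) | u <- words e n, j <- index_iota 1 (size u)])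
    c p.1 * (phi (take p.2 p.1) a * phi (drop p.2 p.1) b) = 0.
Proof.
move=> n_gt0 prim a b; have := congr1 (fun T => T a b) prim; rewrite /= comulH_sum.
rewrite (eq_big_seq (fun u => c u * (phi u a * one b + one a * phi u b) +
    \sum_(1 <= j < size u) c u * (phi (take j u) a * phi (drop j u) b))); last first.
  move=> u u_n; rewrite comulH_phiE ?mulrDr ?big_distrr //.
  by apply: contraTneq u_n => ->; exact: nil_notin_words.
rewrite big_split /= => eq_sum; rewrite big_allpairs_dep /=.
apply: (addrI (\sum_(u <- words e n) c u * (phi u a * one b + one a * phi u b))).
rewrite eq_sum addr0 big_distrl big_distrr -big_split.
by apply: eq_bigr => u _ /=; ring.
Qed.

(* A word [w] of length at least 2 is the only one whose reduced coproduct has a component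
   on [phi (take 1 w) (x) phi (drop 1 w)]. *)
Lemma comul_primitive_coef_eq0 n (c : seq (letter e) -> K) : (0 < n)%N ->
  comul_primitive (fun b => \sum_(w <- words e n) c w * phi w b) ->
  forall w, w \in words e n -> (1 < size w)%N -> c w = 0.
Proof.
move=> n_gt0 prim w w_n w_long.
set S := [seq (u, j) | u <- words e n, j <- index_iota 1 (size u)].
have := sum_fiber2_eq0 phi_basis (a := fun p => c p.1) (f := fun p => take p.2 p.1)
  (g := fun p => drop p.2 p.1) (comul_primitive_reduced n_gt0 prim) (take 1 w) (drop 1 w).
have w_S : (w, 1%N) \in S by apply/allpairsPdep; exists w, 1%N; rewrite mem_index_iota w_long.
have S_uniq : uniq S.
  apply: allpairs_uniq_dep => [|u _|[u j] [u' j'] _ _ [-> ->]] //.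
    exact: uniq_words.
  exact: iota_uniq.
rewrite big_mkcond (bigD1_seq _ w_S S_uniq) /= !eqxx big1_seq ?addr0 // => p.
case/andP => p_neq /allpairsPdep [u [j [_ j_range p_eq]]]; move: p_neq; rewrite {}p_eq /=.
move: j_range; rewrite mem_index_iota => /andP [_ j_lt].
case: ifP => // /andP [/eqP eq_take /eqP eq_drop].
by have [-> ->] := eq_take_drop (ltnW j_lt) (ltnW w_long) eq_take eq_drop; rewrite eqxx.
Qed.

Lemma mem_primitive_span n (v : 'rV[K]_(hdim H n)) : (0 < n)%N ->
  v \in <<selected_rows phi n (@length1 e)>>%VS <-> primitive (embed v).
Proof.
move=> n_gt0; split=> [v_span|[_]].
  split; first exact: homog_finsupp (homog_embed v).
  rewrite (embed_selected_span e0 phi_homog v_span); apply: comul_primitive_sum => i.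
  by apply/comul_primitive_phi1/eqP; case/andP: (nth_selected_words i).
have [c v_eq] := homog_words_decomposition e0 phi_homog phi_basis (homog_embed v).
rewrite v_eq => v_prim; rewrite -(proj_embed v) v_eq.
apply: (proj_sum_mem_selected e0 phi_homog (f := id)) => w w_n _ /= c_neq0.
rewrite /length1; case: (ltngtP (size w) 1) => // [|w_long].
  rewrite ltnS leqn0 size_eq0 => /eqP w_nil.
  by rewrite w_nil (negbTE (nil_notin_words _ n_gt0)) in w_n.
by rewrite (comul_primitive_coef_eq0 n_gt0 v_prim w_n w_long) eqxx in c_neq0.
Qed.

End Cofree.

End GradedConnected.

Unset Implicit Arguments. Set Strict Implicit.

Theorem lemma4 (K : fieldType) (char2 : (2%:R : K) != 0) (H : hopf_data K) :
  is_graded_connected_hopf H -> is_free H -> is_cofree H ->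
  forall n : nat, (1 <= n)%N ->
    exists G D : {vspace 'rV[K]_(hdim H n)},
      (forall v, v \in G <-> primitive (embed v)) /\
      (forall v, v \in D <-> in_Hplus2 (embed v)) /\
      \dim G = (\dim (fullv : {vspace 'rV[K]_(hdim H n)}) - \dim D)%N.
Proof.
move=> [mul_graded [_ [unit_graded [_ [hdim0 [mul_assoc [mul_unit Hopf]]]]]]].
have [_ [_ [_ [_ [_ [counit_one _]]]]]] := Hopf.
move=> [e [gen [e0 [gen_homog gen_basis]]]].
move=> [e' [phi [e'0 phi_homog phi_basis phi_comul phi_counit]]] n n_gt0.
have mul1H (x : elt H) (x_supp : finsupp x) : mulH (@oneH K H) x = x := (mul_unit x x_supp).1.
have mono_homog := homog_monomial mul_graded unit_graded gen_homog.
have dim_free := hdim_eq_size_words e0 mono_homog gen_basis.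
have dim_cofree := hdim_eq_size_words e'0 phi_homog phi_basis.
exists <<selected_rows phi n (@length1 e')>>%VS.
exists <<selected_rows (monomial gen) n (predC (@length1 e))>>%VS.
split; first by move=> v; apply: mem_primitive_span.
split; first by move=> v; apply: mem_Hplus2_span.
rewrite !dim_selected_span // dimvf /dim /= mul1n dim_free.
rewrite -(count_predC (@length1 e)) addnK !count_length1_words //.
by apply: eq_alphabet_of_size_words => // m; rewrite -dim_free -dim_cofree.
Qed.
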